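(* Let $L:\mathbb{R}^d\to\mathbb{R}^{\mathcal{Y}}_+$ be a polyhedral loss, $\ell:\mathcal{R}\to\mathbb{R}^{\mathcal{Y}}_+$ a discrete loss, and $\psi:\mathbb{R}^d\to\mathcal{R}$ a link. Then $(L,\psi)$ is calibrated with respect to $\ell$ if and only if there exists $\epsilon>0$ such that $\psi$ is $\epsilon$-separated with respect to $\mathrm{prop}[L]$ and $\mathrm{prop}[\ell]$.
   Context: $\mathcal{Y}$ is a finite label set, $\Delta_{\mathcal{Y}}$ the probability simplex on $\mathcal{Y}$, $\mathbb{R}^{\mathcal{Y}}_+$ the nonnegative orthant. A loss $L:\mathcal{R}\to\mathbb{R}^{\mathcal{Y}}_+$ has expected loss $\langle p,L(r)\rangle$; it is discrete if $\mathcal{R}$ is finite; $L:\mathbb{R}^d\to\mathbb{R}^{\mathcal{Y}}_+$ is polyhedral if each coordinate is a pointwise maximum of finitely many affine functions of $u$. For a loss whose expected loss attains its infimum for every $p$, $\mathrm{prop}[L](p)=\arg\min_r\langle p,L(r)\rangle$ (polyhedral and discrete losses have this property). $(L,\psi)$ is calibrated with respect to $\ell$ if for all $p\in\Delta_{\mathcal{Y}}$, $\inf_{u:\psi(u)\notin\mathrm{prop}[\ell](p)}\langle p,L(u)\rangle>\inf_{u\in\mathbb{R}^d}\langle p,L(u)\rangle$ (infimum over the empty set is $+\infty$). For properties $\Gamma:\Delta_{\mathcal{Y}}\rightrightarrows\mathbb{R}^d$, $\gamma:\Delta_{\mathcal{Y}}\rightrightarrows\mathcal{R}$, a link $\psi$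 is $\epsilon$-separated with respect to $\Gamma$ and $\gamma$ if for all $u\in\mathbb{R}^d$ and $p\in\Delta_{\mathcal{Y}}$ with $\psi(u)\notin\gamma(p)$ we have $d_\infty(u,\Gamma(p))\ge\epsilon$, where $d_\infty(u,A)=\inf_{a\in A}\|u-a\|_\infty$. *)

From HB Require Import structures.
From mathcomp Require Import all_boot all_order all_algebra.
From mathcomp Require Import classical_sets boolp reals constructive_ereal ereal.
Set Implicit Arguments. Unset Strict Implicit. Unset Printing Implicit Defensive.
Import Order.TTheory GRing.Theory Num.Theory.
Local Open Scope ring_scope.
Local Open Scope classical_set_scope.

Section Defs.
Variables (R : realType) (Y : finType).

Definition simplex (p : Y -> R) : Prop :=
  (forall y, 0 <= p y) /\ \sum_(y : Y) p y = 1.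

Definition exp_loss (Rep : Type) (L : Rep -> Y -> R) (p : Y -> R) (r : Rep) : R :=
  \sum_(y : Y) p y * L r y.

Definition nonneg_loss (Rep : Type) (L : Rep -> Y -> R) : Prop :=
  forall r y, 0 <= L r y.

(* polyhedral: each coordinate is a pointwise max of finitely many
   (at least one) affine functions of u *)
Definition polyhedral (d : nat) (L : 'rV[R]_d -> Y -> R) : Prop :=
  nonneg_loss L /\
  forall y : Y, exists (k : nat) (a : 'I_k.+1 -> 'rV[R]_d) (b : 'I_k.+1 -> R),
    forall u : 'rV[R]_d, (forall i, \sum_(j < d) a i 0 j * u 0 j + b i <= L u y) /\
              (exists i, L u y = \sum_(j < d) a i 0 j * u 0 j + b i).

Definition discrete_loss (Rep : finType) (l : Rep -> Y -> R) : Prop :=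
  nonneg_loss l.

Definition prop (Rep : Type) (L : Rep -> Y -> R) (p : Y -> R) : set Rep :=
  [set r | forall r', exp_loss L p r <= exp_loss L p r'].

(* calibration; ereal_inf of the empty set is +oo *)
Definition calibrated (d : nat) (Rep : Type) (L : 'rV[R]_d -> Y -> R)
    (psi : 'rV[R]_d -> Rep) (l : Rep -> Y -> R) : Prop :=
  forall p, simplex p ->
    (ereal_inf [set (exp_loss L p u)%:E | u in [set u | ~ prop l p (psi u)]]
     > ereal_inf [set (exp_loss L p u)%:E | u in [set: 'rV[R]_d]])%E.

Definition linf_norm (d : nat) (u : 'rV[R]_d) : R :=
  \big[Num.max/0]_(j < d) `|u 0 j|.

(* d_inf(u, A) = inf_{a in A} ||u - a||_inf  (+oo if A is empty) *)
Definition d_inf (d : nat) (u : 'rV[R]_d) (A : set 'rV[R]_d) : \bar R :=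
  ereal_inf [set (linf_norm (u - a))%:E | a in A].

Definition eps_separated (d : nat) (Rep : Type) (psi : 'rV[R]_d -> Rep)
    (Gamma : (Y -> R) -> set 'rV[R]_d) (gamma : (Y -> R) -> set Rep) (eps : R) : Prop :=
  forall (u : 'rV[R]_d) (p : Y -> R), simplex p -> ~ gamma p (psi u) -> (eps%:E <= d_inf u (Gamma p))%E.

End Defs.

From HB Require Import structures.
From mathcomp Require Import all_boot all_order all_algebra.
From mathcomp Require Import classical_sets boolp reals constructive_ereal ereal.
From mathcomp Require Import ring lra zify.
Set Implicit Arguments. Unset Strict Implicit. Unset Printing Implicit Defensive.
Import Order.TTheory GRing.Theory Num.Theory.
Local Open Scope ring_scope.

(* For a fixed distribution [p], choosing one affine piece of [L] for every label
   exhibits the expected loss [u |-> <p, L u>] as a finite maximum of affine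
   functions. Fourier-Motzkin elimination gives the linear-programming facts needed
   about such a function: its minimum is attained, and it is a weak sharp minimum,
   i.e. at sup-distance [eps] from the argmin the value exceeds the minimum by some
   [de > 0]. Sharpness turns [eps]-separation into calibration. Conversely, the
   expected loss is Lipschitz, so the calibration gap at [p] yields a separation
   constant [eps_p]. Whether [u] is optimal for [p] only depends on which affine
   pieces are active at [u], so the pair [(prop[L](p), prop[l](p))] takes finitely
   many values and the least [eps_p] over them is uniform. *)

Section FourierMotzkin.
Variable R : realFieldType.

(* [(a, b)] encodes the inequality [\sum_j a j * w j + b <= 0] in the variables
   [w 0, w 1, ...]; [ineq_val N] only reads the first [N] of them. *)
Definition ineq := ((nat -> R) * R)%type.

Definition ineq_val (N : nat) (r : ineq) (w : nat -> R) : R :=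
  \sum_(j < N) r.1 j * w j + r.2.

Definition solves (N : nat) (sys : seq ineq) (w : nat -> R) : Prop :=
  forall r, r \in sys -> ineq_val N r w <= 0.

Lemma eq_ineq_val N r w w' : (forall j, (j < N)%N -> w j = w' j) ->
  ineq_val N r w = ineq_val N r w'.
Proof. by move=> ww'; congr (_ + _); apply: eq_bigr => j _; rewrite ww'. Qed.

Lemma affine_le0_pos (a b t : R) : 0 < a -> (b + a * t <= 0) = (t <= - b / a).
Proof. by move=> a_gt0; rewrite ler_pdivlMr //; apply/idP/idP => ?; lra. Qed.

Lemma affine_le0_neg (a b t : R) : a < 0 -> (b + a * t <= 0) = (- b / a <= t).
Proof.
move=> a_lt0; have -> : - b / a = b / - a by rewrite invrN mulrN mulNr.
by rewrite ler_pdivrMr ?oppr_gt0 //; apply/idP/idP => ?; lra.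
Qed.

Lemma exists_between (ls us : seq R) :
  (forall l u, l \in ls -> u \in us -> l <= u) ->
  exists t, (forall l, l \in ls -> l <= t) /\ (forall u, u \in us -> t <= u).
Proof.
move=> ls_us; exists (\big[Num.max/(\big[Num.min/0]_(u <- us) u)]_(l <- ls) l).
split=> [l l_in|u u_in]; first by apply: le_bigmax_seq.
rewrite big_seq; apply: bigmax_le => [|l l_in]; last exact: ls_us.
by apply: ge_bigmin_seq.
Qed.

Definition set_var (w : nat -> R) (N : nat) (t : R) : nat -> R :=
  fun j => if j == N then t else w j.

Lemma ineq_val_set_var N r w t :
  ineq_val N.+1 r (set_var w N t) = ineq_val N r w + r.1 N * t.
Proof.
rewrite /ineq_val big_ord_recr /= /set_var eqxx addrAC; congr (_ + _ + _).
by apply: eq_bigr => i _ /=; rewrite ltn_eqF.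
Qed.

Definition combine (N : nat) (rp rn : ineq) : ineq :=
  (fun j => rp.1 N * rn.1 j - rn.1 N * rp.1 j, rp.1 N * rn.2 - rn.1 N * rp.2).

Lemma ineq_val_combine M N rp rn w :
  ineq_val M (combine N rp rn) w = rp.1 N * ineq_val M rn w - rn.1 N * ineq_val M rp w.
Proof.
rewrite /ineq_val /=.
rewrite [X in X + _](_ : _ = rp.1 N * (\sum_(j < M) rn.1 j * w j)
                             - rn.1 N * (\sum_(j < M) rp.1 j * w j)); first by ring.
by rewrite !mulr_sumr -sumrB; apply: eq_bigr => j _; rewrite mulrBl !mulrA.
Qed.

Definition eliminate (N : nat) (sys : seq ineq) : seq ineq :=
  [seq r <- sys | r.1 N == 0] ++
  [seq combine N rp rn | rp <- [seq r <- sys | 0 < r.1 N],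
                         rn <- [seq r <- sys | r.1 N < 0]].

Lemma eliminateP N sys w :
  (exists t, solves N.+1 sys (set_var w N t)) <-> solves N (eliminate N sys) w.
Proof.
split=> [[t sol] r | sol].
  rewrite mem_cat => /orP [|/allpairsP [[rp rn] [/= rp_in rn_in ->]]].
    rewrite mem_filter => /andP [/eqP r0 r_in].
    by have := sol r r_in; rewrite ineq_val_set_var r0 mul0r addr0.
  move: rp_in rn_in; rewrite !mem_filter => /andP [a_gt0 rp_in] /andP [b_lt0 rn_in].
  have := sol _ rp_in; have := sol _ rn_in; rewrite !ineq_val_set_var ineq_val_combine.
  nra.
pose bound r := - ineq_val N r w / r.1 N.
have [|t [lo_t t_hi]] := exists_between (ls := [seq bound r | r <- sys & r.1 N < 0])
                                        (us := [seq bound r | r <- sys & 0 < r.1 N]).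
  move=> l u /mapP [rn /[!mem_filter] /andP [b_lt0 rn_in] ->].
  move=> /mapP [rp /[!mem_filter] /andP [a_gt0 rp_in] ->].
  have comb_in : combine N rp rn \in eliminate N sys.
    rewrite mem_cat; apply/orP; right; apply/allpairsP.
    by exists (rp, rn); rewrite !mem_filter a_gt0 b_lt0.
  rewrite /bound -affine_le0_neg //.
  have := sol _ comb_in; rewrite ineq_val_combine.
  have -> : ineq_val N rn w + rn.1 N * (- ineq_val N rp w / rp.1 N) =
            (rp.1 N * ineq_val N rn w - rn.1 N * ineq_val N rp w) / rp.1 N.
    by field; exact: lt0r_neq0.
  by move=> le0; apply: mulr_le0_ge0 => //; rewrite invr_ge0 ltW.
exists t => r r_in; rewrite ineq_val_set_var.
case: (ltgtP (r.1 N) 0) => [b_lt0|a_gt0|r0].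
- by rewrite affine_le0_neg //; apply: lo_t; apply/mapP; exists r; rewrite // mem_filter b_lt0.
- by rewrite affine_le0_pos //; apply: t_hi; apply/mapP; exists r; rewrite // mem_filter a_gt0.
- rewrite r0 mul0r addr0; apply: sol.
  by rewrite mem_cat mem_filter r0 eqxx r_in.
Qed.

Theorem fourier_motzkin (n k : nat) (sys : seq ineq) : exists sys' : seq ineq,
  forall z, (exists w, (forall j, (j < n)%N -> w j = z j) /\ solves (n + k) sys w) <->
            solves n sys' z.
Proof.
elim: k sys => [|k IH] sys.
  exists sys => z; rewrite addn0; split=> [[w [wz sol]] r r_in | sol]; last by exists z.
  by rewrite -(eq_ineq_val r wz); apply: sol.
have [sys' sys'P] := IH (eliminate (n + k) sys).
exists sys' => z; rewrite -sys'P; split=> [[w [wz sol]] | [w [wz /eliminateP [t sol]]]].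
  exists w; split=> //; apply/eliminateP; exists (w (n + k)).
  have -> : set_var w (n + k) (w (n + k)) = w.
    by apply: funext => j; rewrite /set_var; case: eqP => // ->.
  by rewrite -addnS.
exists (set_var w (n + k) t); split; last by rewrite addnS.
by move=> j j_lt; rewrite /set_var ifN ?wz //; apply/eqP; lia.
Qed.

Lemma ineq_val1 r t : ineq_val 1 r (fun=> t) = r.2 + r.1 0%N * t.
Proof. by rewrite /ineq_val big_ord1 addrC. Qed.

Lemma solves1_min (sys : seq ineq) (b t0 : R) :
  solves 1 sys (fun=> t0) -> (forall t, solves 1 sys (fun=> t) -> b <= t) ->
  exists m, solves 1 sys (fun=> m) /\ forall t, solves 1 sys (fun=> t) -> m <= t.
Proof.
move=> sol0 lb.
set m := \big[Num.max/b]_(r <- sys | r.1 0%N < 0) (- r.2 / r.1 0%N).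
have least t : solves 1 sys (fun=> t) -> m <= t.
  move=> sol; rewrite /m big_seq_cond; apply: bigmax_le => [|r /andP [r_in neg]].
    exact: lb.
  by rewrite -affine_le0_neg // -ineq_val1 sol.
exists m; split=> // r r_in; rewrite ineq_val1.
case: (ltgtP (r.1 0%N) 0) => [neg|pos|r0].
- by rewrite affine_le0_neg //; apply: (bigmax_sup_seq _ r).
- apply: (@le_trans _ _ (r.2 + r.1 0%N * t0)); last by rewrite -ineq_val1 sol0.
  by rewrite lerD2l ler_pM2l // (least _ sol0).
- by have := sol0 r r_in; rewrite !ineq_val1 r0 !mul0r.
Qed.

Definition coords2 (t z : R) : nat -> R :=
  fun j => if j == 0%N then t else if j == 1%N then z else 0.

Lemma ineq_val2 r t z : ineq_val 2 r (coords2 t z) = (r.1 0%N * t + r.2) + r.1 1%N * z.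
Proof. by rewrite /ineq_val !big_ord_recl big_ord0 /= addr0 addrAC. Qed.

Lemma solves2_linear_growth (sys : seq ineq) (m z0 : R) :
  solves 2 sys (coords2 m z0) -> (forall z, solves 2 sys (coords2 m z) -> z <= 0) ->
  exists2 k, 0 <= k &
    forall t z, solves 2 sys (coords2 t z) -> m <= t -> z <= k * (t - m).
Proof.
move=> sol0 z_le0; have z0_le0 := z_le0 _ sol0.
have [[r [r_in pos tight]] | none] :=
  pselect (exists r, [/\ r \in sys, 0 < r.1 1%N & 0 <= r.1 0%N * m + r.2]).
  exists (`|r.1 0%N| / r.1 1%N) => [|t z sol m_le_t].
    by apply: divr_ge0; [exact: normr_ge0 | exact: ltW].
  have := sol r r_in; rewrite ineq_val2 => le0.
  have := ler_norm (- r.1 0%N); rewrite normrN => abs.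
  rewrite mulrAC ler_pdivlMr //; nra.
exfalso.
have slack r : r \in sys -> 0 < r.1 1%N -> r.1 0%N * m + r.2 < 0.
  by move=> r_in pos; rewrite ltNge; apply/negP => tight; apply: none; exists r.
set zeta := \big[Num.min/1]_(r <- sys | 0 < r.1 1%N) (- (r.1 0%N * m + r.2) / r.1 1%N).
have zeta_gt0 : 0 < zeta.
  rewrite /zeta big_seq_cond.
  apply: (big_ind (fun x => 0 < x)) => // [x y|r /andP [r_in pos]].
    by rewrite lt_min => -> ->.
  by apply: divr_gt0; rewrite // oppr_gt0 slack.
suff : zeta <= 0 by rewrite leNgt zeta_gt0.
apply: z_le0 => r r_in; rewrite ineq_val2.
case: (ltP 0 (r.1 1%N)) => [pos|npos].
  by rewrite affine_le0_pos //; apply: (bigmin_inf_seq _ r).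
by have := sol0 r r_in; rewrite ineq_val2; nra.
Qed.

End FourierMotzkin.

Section BlockVariables.
Variables (R : pzRingType) (d : nat).

Definition dot (a u : 'rV[R]_d) : R := \sum_(j < d) a 0 j * u 0 j.

Definition block (o : nat) (w : nat -> R) : 'rV[R]_d := \row_i w (o + i)%N.

Definition embed (o : nat) (u : 'rV[R]_d) : nat -> R :=
  fun j => \sum_(i < d) (if j == (o + i)%N then u 0 i else 0).

Definition unit_var (i : nat) : nat -> R := fun j => if j == i then 1 else 0.

Lemma sum_delta N i (c : R) (w : nat -> R) : (i < N)%N ->
  \sum_(j < N) (if (j : nat) == i then c else 0) * w j = c * w i.
Proof.
move=> i_lt; rewrite (bigD1 (Ordinal i_lt)) //= eqxx big1 ?addr0 // => j j_neq.
by rewrite ifN ?mul0r //; apply: contra j_neq => /eqP j_eq; apply/eqP; apply: ord_inj.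
Qed.

Lemma sum_unit_var N i (w : nat -> R) : (i < N)%N ->
  \sum_(j < N) unit_var i j * w j = w i.
Proof. by move=> i_lt; rewrite sum_delta // mul1r. Qed.

Lemma sum_embed N o a (w : nat -> R) : (o + d <= N)%N ->
  \sum_(j < N) embed o a j * w j = dot a (block o w).
Proof.
move=> oN; under eq_bigr do rewrite mulr_suml.
rewrite exchange_big /= /dot; apply: eq_bigr => i _.
by rewrite sum_delta ?mxE //; have := ltn_ord i; lia.
Qed.

Lemma embed_out o u j : (j < o)%N || (o + d <= j)%N -> embed o u j = 0.
Proof.
move=> out; apply: big1 => i _; rewrite ifN //.
by apply/eqP => j_eq; move: out; rewrite j_eq; have := ltn_ord i; lia.
Qed.

Lemma embed_in o u (i : 'I_d) : embed o u (o + i) = u 0 i.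
Proof.
rewrite /embed (bigD1 i) //= eqxx big1 ?addr0 // => j j_neq; rewrite ifN //.
by rewrite eqn_add2l; apply: contra j_neq => /eqP ij; apply/eqP; apply: ord_inj; rewrite ij.
Qed.

Lemma block_add_embed o (z : nat -> R) u : (forall i : 'I_d, z (o + i)%N = 0) ->
  block o (fun j => z j + embed o u j) = u.
Proof. by move=> z0; apply/rowP => i; rewrite mxE z0 add0r embed_in. Qed.

End BlockVariables.
Arguments block {R d} o w.

Section LinfNorm.
Variables (R : realType) (d : nat).

Lemma linf_norm_ge0 (u : 'rV[R]_d) : 0 <= linf_norm u.
Proof. by rewrite /linf_norm; exact: bigmax_ge_id. Qed.

Lemma normr_le_linf_norm (u : 'rV[R]_d) j : `|u 0 j| <= linf_norm u.
Proof. by rewrite /linf_norm; exact: le_bigmax. Qed.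

Lemma linf_norm_le (u : 'rV[R]_d) x :
  0 <= x -> (forall j, `|u 0 j| <= x) -> linf_norm u <= x.
Proof. by move=> x_ge0 le; rewrite /linf_norm; exact: bigmax_le. Qed.

End LinfNorm.

Section MaxAffine.
Variables (R : realType) (d : nat) (K : finType).
Variables (c : K -> 'rV[R]_d) (e : K -> R) (f : 'rV[R]_d -> R).
Hypothesis f_le : forall u t, f u <= t <-> forall k, dot (c k) u + e k <= t.

Definition epi_row (o : nat) (k : K) : ineq R :=
  (fun j => embed o (c k) j - unit_var R 0 j, e k).

Lemma epi_rowsP o w :
  solves (o.+1 + d) [seq epi_row o.+1 k | k <- enum K] w <-> f (block o.+1 w) <= w 0%N.
Proof.
have val k : ineq_val (o.+1 + d) (epi_row o.+1 k) w = dot (c k) (block o.+1 w) + e k - w 0%N.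
  rewrite /ineq_val /=; under eq_bigr do rewrite mulrBl.
  by rewrite sumrB sum_embed // sum_unit_var; [rewrite addrAC | lia].
split=> [sol | le r /mapP [k _ ->]].
  by apply/f_le => k; have := sol _ (map_f _ (mem_enum _ k)); rewrite val; lra.
by rewrite val; have := (f_le _ _).1 le k; lra.
Qed.

Lemma max_affine_attains_min (b : R) : (forall u, b <= f u) ->
  exists v, forall u, f v <= f u.
Proof.
move=> f_lb.
have [sys sysP] := fourier_motzkin 1 d [seq epi_row 1 k | k <- enum K].
have epiP t : solves 1 sys (fun=> t) <-> exists u, f u <= t.
  rewrite -sysP; split=> [[w [wt /epi_rowsP fw]] | [u fu]].
    by exists (block 1 w); have /= <- := wt 0%N isT.
  exists (fun j => (if j == 0%N then t else 0) + embed 1 u j); split.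
    by move=> j; rewrite ltnS leqn0 => /eqP ->; rewrite embed_out // addr0.
  apply/epi_rowsP; rewrite block_add_embed; last by move=> i; rewrite add1n.
  by rewrite /= embed_out // addr0.
have sol0 : solves 1 sys (fun=> f 0) by apply/epiP; exists 0.
have lb t : solves 1 sys (fun=> t) -> b <= t.
  by move=> /epiP [u fu]; exact: le_trans (f_lb u) fu.
have [m [/epiP [v fv] least]] := solves1_min sol0 lb.
by exists v => u; apply: le_trans fv (least _ _); apply/epiP; exists u.
Qed.

Variable v0 : 'rV[R]_d.
Hypothesis v0_min : forall u, f v0 <= f u.

(* A Hoffman-type error bound. *)
Lemma affine_le_excess (a : 'rV[R]_d) (g : R) :
  (forall u, f u <= f v0 -> dot a u + g <= 0) ->
  exists2 k, 0 <= k & forall u, dot a u + g <= k * (f u - f v0).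
Proof.
move=> le0_on_argmin.
pose z_row : ineq R := (fun j => unit_var R 1 j - embed 2 a j, - g).
have z_val w : ineq_val (2 + d) z_row w = w 1%N - dot a (block 2 w) - g.
  rewrite /ineq_val /=; under eq_bigr do rewrite mulrBl.
  by rewrite sumrB sum_unit_var // sum_embed.
have [sys sysP] := fourier_motzkin 2 d (z_row :: [seq epi_row 2 k | k <- enum K]).
have graphP t z : solves 2 sys (coords2 t z) <-> exists u, f u <= t /\ z <= dot a u + g.
  rewrite -sysP; split=> [[w [wtz sol]] | [u [fu zu]]].
    have w0 : w 0%N = t := wtz 0%N isT.
    have w1 : w 1%N = z := wtz 1%N isT.
    have /epi_rowsP fw : solves (2 + d) [seq epi_row 2 k | k <- enum K] w.
      by move=> r r_in; apply: sol; rewrite inE r_in orbT.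
    exists (block 2 w); split; first by rewrite -w0.
    by have := sol _ (mem_head _ _); rewrite z_val w1; lra.
  pose w j := coords2 t z j + embed 2 u j.
  have wu : block 2 w = u by apply: block_add_embed => i; rewrite add2n.
  exists w; split=> [j j_lt|]; first by rewrite /w embed_out ?j_lt // addr0.
  have epi : solves (2 + d) [seq epi_row 2 k | k <- enum K] w.
    by apply/epi_rowsP; rewrite wu /w embed_out // addr0.
  move=> r; rewrite inE => /orP [/eqP -> | /epi //].
  by rewrite z_val wu /w embed_out // addr0 /coords2 /=; lra.
have sol0 : solves 2 sys (coords2 (f v0) (dot a v0 + g)).
  by apply/graphP; exists v0; split.
have [|k k_ge0 growth] := solves2_linear_growth sol0.
  by move=> z /graphP [u [fu zu]]; exact: le_trans zu (le0_on_argmin _ fu).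
by exists k => // u; apply: (growth _ _ _ (v0_min u)); apply/graphP; exists u; split.
Qed.

Lemma affine_le_excess_seq (T : eqType) (rs : seq T) (a : T -> 'rV[R]_d) (g : T -> R) :
  (forall r, r \in rs -> forall u, f u <= f v0 -> dot (a r) u + g r <= 0) ->
  exists2 k, 0 <= k &
    forall r, r \in rs -> forall u, dot (a r) u + g r <= k * (f u - f v0).
Proof.
elim: rs => [|r rs IH] le0; first by exists 0.
have [k1 k1_ge0 k1P] := affine_le_excess (le0 r (mem_head _ _)).
have [|k2 k2_ge0 k2P] := IH.
  by move=> r' r'_in; apply: le0; rewrite inE r'_in orbT.
exists (Num.max k1 k2) => [|r' r'_in u]; first by rewrite le_max k1_ge0.
have ex_ge0 : 0 <= f u - f v0 by rewrite subr_ge0.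
move: r'_in; rewrite inE => /orP [/eqP -> | /k2P/(_ u) le].
  by apply: le_trans (k1P u) (ler_wpM2r ex_ge0 _); rewrite le_max lexx.
by apply: le_trans le (ler_wpM2r ex_ge0 _); rewrite le_max lexx orbT.
Qed.

(* Variables: [u] at [0, d), the radius [s] at [d], the point [v] at [d + 1, 2d + 1). *)
Definition coords_us (u : 'rV[R]_d) (s : R) : nat -> R :=
  fun j => embed 0 u j + (if j == d then s else 0).

Lemma coords_us_lt u s (i : 'I_d) : coords_us u s i = u 0 i.
Proof. by rewrite /coords_us (ltn_eqF (ltn_ord i)) addr0 -[nat_of_ord i]add0n embed_in. Qed.

Lemma coords_us_d u s : coords_us u s d = s.
Proof. by rewrite /coords_us eqxx embed_out ?add0r // add0n leqnn orbT. Qed.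

Lemma ineq_val_coords_us r u s :
  ineq_val d.+1 r (coords_us u s) = dot (\row_i r.1 i) u + r.1 d * s + r.2.
Proof.
rewrite /ineq_val big_ord_recr /= coords_us_d /dot; congr (_ + _ + _).
by apply: eq_bigr => i _; rewrite mxE coords_us_lt.
Qed.

Definition sublevel_row (k : K) : ineq R := (embed d.+1 (c k), e k - f v0).

Definition box_row (j : 'I_d) (sg : R) : ineq R :=
  (fun x => sg * (unit_var R j x - unit_var R (d.+1 + j) x) - unit_var R d x, 0).

Lemma ineq_val_sublevel_row k w :
  ineq_val (d.+1 + d) (sublevel_row k) w = dot (c k) (block d.+1 w) + e k - f v0.
Proof. by rewrite /ineq_val /= sum_embed // addrA. Qed.

Lemma ineq_val_box_row j sg w :
  ineq_val (d.+1 + d) (box_row j sg) w = sg * (w j - w (d.+1 + j)%N) - w d.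
Proof.
rewrite /ineq_val /= addr0; under eq_bigr do rewrite mulrBl -mulrA mulrBl.
by rewrite sumrB -mulr_sumr sumrB !sum_unit_var //; have := ltn_ord j; lia.
Qed.

Lemma argmin_nbhd_ineqs : exists sys, forall u s,
  solves d.+1 sys (coords_us u s) <->
  exists v, f v <= f v0 /\ forall j, `|u 0 j - v 0 j| <= s.
Proof.
set sys0 := [seq sublevel_row k | k <- enum K] ++
            [seq box_row j sg | j <- enum 'I_d, sg <- [:: 1; -1]].
have sub_in k : sublevel_row k \in sys0 by rewrite mem_cat map_f ?mem_enum.
have box_in j sg : sg \in [:: 1; -1] -> box_row j sg \in sys0.
  move=> sg_in; rewrite mem_cat; apply/orP; right.
  by apply/allpairsP; exists (j, sg); split; rewrite /= ?mem_enum.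
have [sys sysP] := fourier_motzkin d.+1 d sys0.
exists sys => u s; rewrite -sysP; split=> [[w [wus sol]] | [v [fv box]]].
  have w_u (j : 'I_d) : w j = u 0 j.
    by rewrite wus ?coords_us_lt //; have := ltn_ord j; lia.
  have w_s : w d = s by rewrite wus ?coords_us_d //; lia.
  exists (block d.+1 w); split=> [|j].
    by apply/f_le => k; have := sol _ (sub_in k); rewrite ineq_val_sublevel_row; lra.
  have := sol _ (box_in j 1 (mem_head _ _)).
  have := sol _ (box_in j (-1) (mem_last 1 [:: -1])).
  rewrite !ineq_val_box_row w_u w_s mxE ler_norml => lo hi; apply/andP; split; lra.
pose w x := coords_us u s x + embed d.+1 v x.
have w_v : block d.+1 w = v.
  by apply: block_add_embed => i; rewrite /coords_us embed_out ?ifN ?addr0 //; lia.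
have w_u (j : 'I_d) : w j = u 0 j.
  by rewrite /w coords_us_lt embed_out ?addr0 //; have := ltn_ord j; lia.
have w_s : w d = s by rewrite /w coords_us_d embed_out ?addr0 //; lia.
have w_v' (j : 'I_d) : w (d.+1 + j)%N = v 0 j.
  by have := congr1 (fun M : 'rV[R]_d => M 0 j) w_v; rewrite mxE.
exists w; split=> [j j_lt|r]; first by rewrite /w embed_out ?j_lt // addr0.
rewrite mem_cat => /orP [/mapP [k _ ->] | /allpairsP [[j sg] [_ /= sg_in ->]]].
  by rewrite ineq_val_sublevel_row w_v; have := (f_le v (f v0)).1 fv k; lra.
rewrite /= ineq_val_box_row w_u w_s w_v'; move: sg_in (box j).
by rewrite !inE ler_norml => /orP [] /eqP -> /andP [lo hi]; lra.
Qed.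

Theorem max_affine_sharp (eps : R) : 0 < eps -> exists2 de, 0 < de &
  forall u, (forall v, f v <= f v0 -> eps <= linf_norm (u - v)) -> f v0 + de <= f u.
Proof.
move=> eps_gt0; have [sys nbhdP] := argmin_nbhd_ineqs.
have [|k k_ge0 excess] :=
  affine_le_excess_seq (rs := sys) (a := fun r => \row_i r.1 i) (g := snd).
  move=> r r_in u fu.
  have : solves d.+1 sys (coords_us u 0).
    by apply/nbhdP; exists u; split=> // j; rewrite subrr normr0.
  by move=> /(_ r r_in); rewrite ineq_val_coords_us mulr0 addr0.
pose rho := \big[Num.min/1]_(r <- sys | r.1 d < 0) - r.1 d.
have rho_gt0 : 0 < rho.
  rewrite /rho; apply: (big_ind (fun x => 0 < x)) => // [x y|r neg].
    by rewrite lt_min => -> ->.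
  by rewrite oppr_gt0.
exists (rho * eps / (2 * (k + 1))) => [|u far].
  by apply: divr_gt0; [exact: mulr_gt0 | lra].
(* Some inequality of the neighbourhood system fails at radius [eps / 2] but holds
   at radius [linf_norm (u - v0) >= eps]: its radius coefficient is negative, and
   [excess] turns this into a lower bound on [f u - f v0]. *)
have [/nbhdP [v [fv box]] | /existsNP [r /not_implyP [r_in /negP]]] :=
  pselect (forall r, r \in sys -> ineq_val d.+1 r (coords_us u (eps / 2)) <= 0).
  have := far v fv; have : linf_norm (u - v) <= eps / 2.
    by apply: linf_norm_le => [|j]; [lra | rewrite !mxE; exact: box].
  lra.
rewrite -ltNge ineq_val_coords_us => violated.
have : ineq_val d.+1 r (coords_us u (linf_norm (u - v0))) <= 0.
  apply: ((nbhdP u (linf_norm (u - v0))).2 _ r r_in); exists v0; split=> // j.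
  by have := normr_le_linf_norm (u - v0) j; rewrite !mxE.
rewrite ineq_val_coords_us => satisfied.
have far0 := far v0 (lexx _).
have exc := excess r r_in u; rewrite /= in exc.
have neg : r.1 d < 0 by nra.
have rho_le : rho <= - r.1 d by apply: (bigmin_inf_seq _ r).
have fu_ge := v0_min u.
have rho_eps : rho * eps <= - r.1 d * eps by rewrite ler_pM2r.
suff : rho * eps / (2 * (k + 1)) <= f u - f v0 by lra.
rewrite ler_pdivrMr; last by lra.
nra.
Qed.

End MaxAffine.

Lemma uniform_pos_finite (R : realFieldType) (T : finType) (P : T -> R -> Prop) :
  (forall t, exists2 e, 0 < e & forall e', 0 < e' -> e' <= e -> P t e') ->
  exists2 e, 0 < e & forall t, P t e.
Proof.
move=> small; have /choice [g gP] : forall t, exists e, 0 < e /\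
    forall e', 0 < e' -> e' <= e -> P t e'.
  by move=> t; have [e e_gt0 eP] := small t; exists e.
pose e := \big[Num.min/1]_t g t.
have e_gt0 : 0 < e.
  rewrite /e; apply: (big_ind (fun x => 0 < x)) => // [x y|t _].
    by rewrite lt_min => -> ->.
  by have [] := gP t.
by exists e => // t; have [_ gtP] := gP t; apply: gtP => //; rewrite /e; exact: bigmin_le.
Qed.

Lemma polyhedral_common_pieces (R : realType) (d : nat) (Y : finType)
    (L : 'rV[R]_d -> Y -> R) :
  polyhedral L -> exists N (A : Y -> 'I_N.+1 -> 'rV[R]_d) (B : Y -> 'I_N.+1 -> R),
    forall u y, (forall i, dot (A y i) u + B y i <= L u y) /\
                exists i, L u y = dot (A y i) u + B y i.
Proof.
case=> _ pieces.
have /choice [F FP] : forall y,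
    exists F : {k : nat & (('I_k.+1 -> 'rV[R]_d) * ('I_k.+1 -> R))%type},
    forall u, (forall i, dot ((projT2 F).1 i) u + (projT2 F).2 i <= L u y) /\
              exists i, L u y = dot ((projT2 F).1 i) u + (projT2 F).2 i.
  by move=> y; have [k [a [b ab]]] := pieces y; exists (existT _ k (a, b)).
pose N := \max_(y : Y) projT1 (F y).
(* Indices beyond the number of pieces of [L _ y] repeat its last piece. *)
pose clamp y (i : 'I_N.+1) : 'I_(projT1 (F y)).+1 := inord (minn i (projT1 (F y))).
exists N, (fun y i => (projT2 (F y)).1 (clamp y i)),
  (fun y i => (projT2 (F y)).2 (clamp y i)).
move=> u y; have [le [j Lj]] := FP y u; split=> [i|]; first exact: le.
exists (inord j); rewrite Lj; suff -> : clamp y (inord j) = j by [].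
have := ltn_ord j; have : (projT1 (F y) <= N)%N by apply: leq_bigmax.
move=> kN j_lt; apply: val_inj; rewrite /clamp /= (@inordK N j); last by lia.
by rewrite inordK; [apply/minn_idPl; lia | lia].
Qed.

Section PolyhedralLoss.
Variables (R : realType) (d : nat) (Y : finType) (L : 'rV[R]_d -> Y -> R).
Variables (N : nat) (A : Y -> 'I_N.+1 -> 'rV[R]_d) (B : Y -> 'I_N.+1 -> R).

Definition piece (y : Y) (i : 'I_N.+1) (u : 'rV[R]_d) : R := dot (A y i) u + B y i.

Hypothesis L_pieces : forall u y,
  (forall i, piece y i u <= L u y) /\ exists i, L u y = piece y i u.

Definition active (u : 'rV[R]_d) : {set Y * 'I_N.+1} :=
  [set x | piece x.1 x.2 u == L u x.1].

Definition extrapolate (u u' : 'rV[R]_d) (s : R) : 'rV[R]_d := (1 + s) *: u - s *: u'.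

Lemma dot_extrapolate a u u' s :
  dot a (extrapolate u u' s) = (1 + s) * dot a u - s * dot a u'.
Proof. by rewrite /dot !mulr_sumr -sumrB; apply: eq_bigr => j _; rewrite !mxE; ring. Qed.

Lemma piece_extrapolate y i u u' s :
  piece y i (extrapolate u u' s) = (1 + s) * piece y i u - s * piece y i u'.
Proof. by rewrite /piece dot_extrapolate; ring. Qed.

Lemma loss_extrapolate u u' : active u' = active u ->
  exists2 s, 0 < s & forall y, L (extrapolate u u' s) y = (1 + s) * L u y - s * L u' y.
Proof.
move=> act.
have [s s_gt0 small] : exists2 s, 0 < s & forall x : Y * 'I_N.+1,
    piece x.1 x.2 (extrapolate u u' s) <= (1 + s) * L u x.1 - s * L u' x.1.
  apply: uniform_pos_finite => -[y i] /=.
  have le_u := (L_pieces u y).1 i; have le_u' := (L_pieces u' y).1 i.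
  case: (boolP ((y, i) \in active u)) => [act_u | inact_u].
    have act_u' : (y, i) \in active u' by rewrite act.
    move: act_u act_u'; rewrite !inE /= => /eqP eq_u /eqP eq_u'.
    by exists 1 => // s _ _; rewrite piece_extrapolate eq_u eq_u'.
  have gap : piece y i u < L u y.
    by rewrite lt_neqAle le_u andbT; move: inact_u; rewrite inE.
  exists ((L u y - piece y i u) / (L u' y - piece y i u' + 1)) => [|s s_gt0].
    by apply: divr_gt0; lra.
  rewrite ler_pdivlMr; last by lra.
  by move=> s_le; rewrite piece_extrapolate; nra.
exists s => // y; apply/eqP; rewrite eq_le; apply/andP; split.
  by have [i ->] := (L_pieces (extrapolate u u' s) y).2; exact: (small (y, i)).
have [i L_i] := (L_pieces u y).2.
have : (y, i) \in active u' by rewrite act inE /= -L_i eqxx.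
rewrite inE /= => /eqP L'_i.
by rewrite L_i -L'_i -piece_extrapolate; exact: (L_pieces _ y).1.
Qed.

Definition slope_bound : R := \sum_y \sum_i \sum_(j < d) `|A y i 0 j|.

Lemma slope_bound_ge0 : 0 <= slope_bound.
Proof. by do 3! (apply: sumr_ge0 => ? _). Qed.

Lemma loss_lipschitz y u v : L u y - L v y <= slope_bound * linf_norm (u - v).
Proof.
have [i ->] := (L_pieces u y).2; have le_v := (L_pieces v y).1 i.
apply: le_trans (_ : \sum_(j < d) `|A y i 0 j| * linf_norm (u - v) <= _).
  apply: le_trans (_ : dot (A y i) u - dot (A y i) v <= _).
    by rewrite /piece in le_v *; lra.
  rewrite /dot -sumrB; apply: ler_sum => j _; rewrite -mulrBr.
  apply: le_trans (ler_norm _) _; rewrite normrM; apply: ler_wpM2l => //.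
  by have := normr_le_linf_norm (u - v) j; rewrite !mxE.
rewrite -mulr_suml; apply: ler_wpM2r; first exact: linf_norm_ge0.
rewrite /slope_bound (bigD1 y) //= (bigD1 i) //= -addrA lerDl.
by apply: addr_ge0; repeat (apply: sumr_ge0 => ? _); exact: normr_ge0.
Qed.

Variable p : Y -> R.

Lemma exp_loss_lipschitz u v : (forall y, 0 <= p y) -> \sum_y p y = 1 ->
  exp_loss L p u - exp_loss L p v <= slope_bound * linf_norm (u - v).
Proof.
move=> p_ge0 p_sum1; rewrite /exp_loss -sumrB.
apply: le_trans (_ : \sum_y p y * (slope_bound * linf_norm (u - v)) <= _).
  by apply: ler_sum => y _; rewrite -mulrBr; apply: ler_wpM2l => //; exact: loss_lipschitz.
by rewrite -mulr_suml p_sum1 mul1r.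
Qed.

(* Were [u'] worse than the minimizer [u], the expected loss, affine on the line
   through them a little beyond [u], would decrease past [u]. *)
Lemma prop_active u u' : prop L p u -> active u' = active u -> prop L p u'.
Proof.
move=> u_min act; have [s s_gt0 ext] := loss_extrapolate act.
have ext_exp : exp_loss L p (extrapolate u u' s) =
               (1 + s) * exp_loss L p u - s * exp_loss L p u'.
  by rewrite /exp_loss !mulr_sumr -sumrB; apply: eq_bigr => y _; rewrite ext; ring.
move=> r; apply: (le_trans _ (u_min r)).
by have := u_min (extrapolate u u' s); rewrite ext_exp; nra.
Qed.

Definition mix_slope (sg : {ffun Y -> 'I_N.+1}) : 'rV[R]_d :=
  \row_j \sum_y p y * A y (sg y) 0 j.

Definition mix_offset (sg : {ffun Y -> 'I_N.+1}) : R := \sum_y p y * B y (sg y).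

Lemma dot_mix sg u : dot (mix_slope sg) u + mix_offset sg = \sum_y p y * piece y (sg y) u.
Proof.
rewrite /dot /mix_slope /mix_offset.
under eq_bigr do rewrite mxE mulr_suml.
rewrite exchange_big /= -big_split /=; apply: eq_bigr => y _.
rewrite /piece /dot mulrDr mulr_sumr; congr (_ + _); apply: eq_bigr => j _; ring.
Qed.

Lemma exp_loss_max_affine : (forall y, 0 <= p y) -> forall u t,
  exp_loss L p u <= t <-> forall sg, dot (mix_slope sg) u + mix_offset sg <= t.
Proof.
move=> p_ge0 u t; rewrite /exp_loss; split=> [le sg | le].
  apply: le_trans le; rewrite dot_mix; apply: ler_sum => y _.
  by apply: ler_wpM2l => //; exact: (L_pieces u y).1.
have /choice [sg sgP] : forall y, exists i, L u y = piece y i u.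
  by move=> y; exact: (L_pieces u y).2.
rewrite (eq_bigr (fun y => p y * piece y ([ffun y => sg y] y) u)) => [|y _].
  by rewrite -dot_mix; apply: le.
by rewrite ffunE -sgP.
Qed.

End PolyhedralLoss.

Section InfimumGap.
Local Open Scope classical_set_scope.

Lemma ereal_inf_gapP (R : realType) (T : Type) (F : T -> R) (S : set T) (v0 : T) :
  (forall u, F v0 <= F u) ->
  (ereal_inf [set (F u)%:E | u in S] > ereal_inf [set (F u)%:E | u in [set: T]])%E <->
  exists2 de, 0 < de & forall u, S u -> F v0 + de <= F u.
Proof.
move=> v0_min.
have -> : ereal_inf [set (F u)%:E | u in [set: T]] = (F v0)%:E.
  apply/le_anti/andP; split; first by apply: ereal_inf_lbound; exists v0.
  by apply/ereal_infP => _ [u _ <-]; rewrite lee_fin.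
split=> [| [de de_gt0 above]].
  case E: (ereal_inf _) => [g| |] gap.
  - exists (g - F v0) => [|u Su]; first by rewrite subr_gt0 -lte_fin.
    rewrite addrC subrK -lee_fin -E; apply: ereal_inf_lbound; by exists u.
  - exists 1 => // u Su.
    have : (+oo <= (F u)%:E)%E by rewrite -E; apply: ereal_inf_lbound; exists u.
    by [].
  - by rewrite ltNge leNye in gap.
apply: (@lt_le_trans _ _ (F v0 + de)%:E); first by rewrite lte_fin ltrDl.
by apply/ereal_infP => _ [u Su <-]; rewrite lee_fin above.
Qed.

End InfimumGap.

Lemma d_inf_geP (R : realType) (d : nat) (u : 'rV[R]_d) (S : set 'rV[R]_d) (e : R) :
  (e%:E <= d_inf u S)%E <-> forall v, S v -> e <= linf_norm (u - v).
Proof.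
split=> [ge v Sv | ge]; last by apply/ereal_infP => _ [v Sv <-]; rewrite lee_fin ge.
by rewrite -lee_fin (le_trans ge) //; apply: ereal_inf_lbound; exists v.
Qed.

Lemma uniform_pos_finite_key (R : realFieldType) (T : Type) (S : T -> Prop) (K : finType)
    (key : T -> K) (P : K -> R -> Prop) :
  (forall t, S t -> exists2 e, 0 < e & P (key t) e) ->
  (forall k e e', 0 < e' -> e' <= e -> P k e -> P k e') ->
  exists2 e, 0 < e & forall t, S t -> P (key t) e.
Proof.
move=> P_key P_mono.
have [|e e_gt0 eP] :=
  uniform_pos_finite (P := fun k e => (exists2 t, S t & key t = k) -> P k e).
  move=> k; have [[t St <-] | none] := pselect (exists2 t, S t & key t = k).
    have [e e_gt0 Pe] := P_key t St.
    by exists e => // e' e'_gt0 e'_le _; apply: (P_mono _ e).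
  by exists 1 => // e' _ _ /none [].
by exists e => // t St; apply: eP; exists t.
Qed.

Section Calibration.
Variables (R : realType) (Y : finType) (d : nat) (Rep : finType).
Variables (L : 'rV[R]_d -> Y -> R) (l : Rep -> Y -> R) (psi : 'rV[R]_d -> Rep).
Variables (N : nat) (A : Y -> 'I_N.+1 -> 'rV[R]_d) (B : Y -> 'I_N.+1 -> R).
Hypothesis L_pieces : forall u y,
  (forall i, piece A B y i u <= L u y) /\ exists i, L u y = piece A B y i u.
Hypothesis L_ge0 : nonneg_loss L.

Lemma exp_loss_attains_min p : simplex p ->
  exists v, forall u, exp_loss L p v <= exp_loss L p u.
Proof.
case=> p_ge0 _.
have exp_ge0 u : 0 <= exp_loss L p u.
  by apply: sumr_ge0 => y _; apply: mulr_ge0; [exact: p_ge0 | exact: L_ge0].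
have [v v_min] := max_affine_attains_min (exp_loss_max_affine L_pieces p_ge0) exp_ge0.
by exists v.
Qed.

Lemma separated_calibrated eps : 0 < eps ->
  eps_separated psi (prop L) (prop l) eps -> calibrated L psi l.
Proof.
move=> eps_gt0 sep p p_simplex; have [v0 v0_min] := exp_loss_attains_min p_simplex.
apply/(ereal_inf_gapP _ v0_min).
have [de de_gt0 sharp] :=
  max_affine_sharp (exp_loss_max_affine L_pieces (proj1 p_simplex)) v0_min eps_gt0.
exists de => // u bad; apply: sharp => v v_le.
have v_opt : prop L p v := fun r => le_trans v_le (v0_min r).
exact: (d_inf_geP _ _ _).1 (sep u p p_simplex bad) v v_opt.
Qed.

Definition opt_active (p : Y -> R) : {set {set Y * 'I_N.+1}} :=
  [set P | `[< exists2 u, prop L p u & active L A B u = P >]].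

Lemma prop_activeP p v : prop L p v <-> active L A B v \in opt_active p.
Proof.
rewrite inE; split=> [v_opt | /asboolP [u u_opt act]]; first by apply/asboolP; exists v.
exact (prop_active L_pieces u_opt (esym act)).
Qed.

Definition prop_key (p : Y -> R) := (opt_active p, [set r | `[< prop l p r >]]).

Definition separated_on (k : {set {set Y * 'I_N.+1}} * {set Rep}) (e : R) :=
  forall u v, psi u \notin k.2 -> active L A B v \in k.1 -> e <= linf_norm (u - v).

(* The calibration gap at [p], divided by a Lipschitz constant of the expected loss. *)
Lemma calibrated_separated_at p : calibrated L psi l -> simplex p ->
  exists2 e, 0 < e & separated_on (prop_key p) e.
Proof.
move=> cal p_simplex; have [v0 v0_min] := exp_loss_attains_min p_simplex.
have [de de_gt0 gap] := (ereal_inf_gapP _ v0_min).1 (cal p p_simplex).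
have M_ge0 := slope_bound_ge0 A.
exists (de / (slope_bound A + 1)) => [|u v /= bad /prop_activeP v_opt].
  by apply: divr_gt0 => //; lra.
move: bad; rewrite inE => /asboolPn bad.
have := exp_loss_lipschitz L_pieces u v (proj1 p_simplex) (proj2 p_simplex).
have := gap u bad; have := v_opt v0; have := linf_norm_ge0 (u - v).
rewrite ler_pdivrMr; last by lra.
nra.
Qed.

Lemma calibrated_separated : calibrated L psi l ->
  exists eps, 0 < eps /\ eps_separated psi (prop L) (prop l) eps.
Proof.
move=> cal.
have mono k e e' : 0 < e' -> e' <= e -> separated_on k e -> separated_on k e'.
  by move=> _ e'_le sep_e u v bad opt; exact: le_trans e'_le (sep_e u v bad opt).
have [eps eps_gt0 sep] := uniform_pos_finite_key (key := prop_key) (P := separated_on)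
  (fun p (ps : simplex p) => calibrated_separated_at cal ps) mono.
exists eps; split=> // u p ps bad; apply/d_inf_geP => v v_opt.
apply: (sep p ps u v); first by rewrite /prop_key /= inE; apply/asboolPn.
exact/prop_activeP.
Qed.

End Calibration.

Unset Implicit Arguments.

Theorem theorem5 (R : realType) (Y : finType) (d : nat) (Rep : finType)
    (L : 'rV[R]_d -> Y -> R) (l : Rep -> Y -> R) (psi : 'rV[R]_d -> Rep) :
  polyhedral L -> discrete_loss l ->
  (calibrated L psi l <->
   exists eps : R, 0 < eps /\ eps_separated psi (prop L) (prop l) eps).
Proof.
move=> L_poly _; have [N [A [B L_pieces]]] := polyhedral_common_pieces L_poly.
split; first exact: calibrated_separated L_pieces (proj1 L_poly).
by case=> eps [eps_gt0 sep]; exact (separated_calibrated L_pieces (proj1 L_poly) eps_gt0 sep).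
Qed.
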